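(* There exists a homeomorphism $T\colon\mathscr C\to\mathscr C$ of the Cantor set $\mathscr C$ which is almost totally minimal: $T$ has exactly one fixed point $x^0\in\mathscr C$, and for every $x\in\mathscr C\setminus\{x^0\}$ and every $m\in\mathbb N$, the set $\{T^{mk}(x):k\in\mathbb Z\}$ is dense in $\mathscr C$. *)

From HB Require Import structures.
From mathcomp Require Import all_boot all_order all_algebra.
From mathcomp Require Import all_classical all_reals topology cantor.
Set Implicit Arguments. Unset Strict Implicit. Unset Printing Implicit Defensive.
Import Order.TTheory GRing.Theory Num.Theory.

Definition ziter {X : Type} (T Tinv : X -> X) (n : int) (x : X) : X :=
  match n with
  | Posz k => iter k T x
  | Negz k => iter k.+1 Tinv x
  end.

Definition homeomorphism_with {X : topologicalType} (T Tinv : X -> X) : Prop :=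
  [/\ cancel T Tinv, cancel Tinv T, continuous T & continuous Tinv].

From HB Require Import structures.
From mathcomp Require Import all_boot all_order all_algebra.
From mathcomp Require Import all_classical all_reals topology cantor.
From mathcomp Require Import zify cyclic.
Import Order.TTheory GRing.Theory Num.Theory.
Set Implicit Arguments. Unset Strict Implicit. Unset Printing Implicit Defensive.

(* The Cantor space minus the zero sequence is exhausted by nested
   Kakutani-Rokhlin towers: the tower of level N+1 consists of the four
   spacer cylinders 0^N 1 e1 e2 and of two copies of the tower of level N,
   told apart by the coordinate N+2, so it has h(N+1) = 2 h(N) + 4 floors.
   T moves a point whose first one is at k one floor up in the tower of level
   k+2; the towers being compatible, T is a homeomorphism fixing only the zero
   sequence, and it is continuous there because adjacent floors differ by at
   most one in the position of their first one.
   For density of the T^m-orbit of x, lift x and a point of a target cylinder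
   to a common level N: lifting from level M to level N adds to the floor a
   sum of offsets 1 or h(j) + 2, chosen freely through the coordinates j + 2.
   Since 2^j is periodic modulo the odd part of m, infinitely many levels j
   have h(j) + 1 congruent to one unit modulo m, so these sums reach every
   residue and the target can be put on a floor congruent to that of x. *)

Implicit Types (x y z : nat -> bool).

Fixpoint height n := if n is n'.+1 then (height n').*2.+4 else 0.

Lemma heightS n : height n.+1 = (height n).*2.+4. Proof. by []. Qed.

Lemma height_exp n : height n + 4 = 2 ^ n.+2.
Proof. by elim: n => [//|n IH]; rewrite heightS expnS -IH; lia. Qed.

Definition spacer_rank N (e1 e2 : bool) :=
  if e1 then (if e2 then (height N).*2.+3 else (height N).*2.+2)
  else (if e2 then (height N).+1 else 0).

Definition block_start N (b : bool) := if b then (height N).+2 else 1.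

Definition zero_below k (y : nat -> bool) := forall i, i < k -> y i = false.

Definition spacer N (e1 e2 : bool) (y : nat -> bool) : nat -> bool :=
  fun i => if i < N then false else if i == N then true
    else if i == N.+1 then e1 else if i == N.+2 then e2 else y i.

Definition set_coord p (b : bool) (y : nat -> bool) : nat -> bool :=
  fun i => if i == p then b else y i.

(* The level-[N.+1] tower stacks, from bottom to top: the spacer cylinder
   [0^N 1 0 0], the level-[N] tower restricted to [y N.+2 = false], the spacer
   [0^N 1 0 1], the level-[N] tower restricted to [y N.+2 = true], and the
   spacers [0^N 1 1 0] and [0^N 1 1 1].  [rank N y] is the floor of [y] in the
   level-[N] tower, and [unrank N r y] the point on floor [r] whose coordinates
   beyond [N.+1] are those of [y]; the level-0 tower is empty, so [unrank 0]
   only clears the coordinates 0 and 1, which keeps [unrank_tail] uniform. *)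
Fixpoint rank N (y : nat -> bool) : option nat :=
  if N is N'.+1 then
    match rank N' y with
    | Some r => Some (block_start N' (y N'.+2) + r)
    | None => if y N' then Some (spacer_rank N' (y N'.+1) (y N'.+2)) else None
    end
  else None.

Fixpoint unrank N r (y : nat -> bool) : nat -> bool :=
  if N is N'.+1 then
    if r == 0 then spacer N' false false y
    else if r <= height N' then unrank N' r.-1 (set_coord N'.+2 false y)
    else if r == (height N').+1 then spacer N' false true y
    else if r <= (height N').*2.+1 then
      unrank N' (r - (height N').+2) (set_coord N'.+2 true y)
    else if r == (height N').*2.+2 then spacer N' true false y
    else spacer N' true true y
  else fun i => if i < 2 then false else y i.

Lemma unrankS N r y : unrank N.+1 r y =
    if r == 0 then spacer N false false y
    else if r <= height N then unrank N r.-1 (set_coord N.+2 false y)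
    else if r == (height N).+1 then spacer N false true y
    else if r <= (height N).*2.+1 then
      unrank N (r - (height N).+2) (set_coord N.+2 true y)
    else if r == (height N).*2.+2 then spacer N true false y
    else spacer N true true y.
Proof. by []. Qed.

Lemma rankS N y : rank N.+1 y =
  match rank N y with
  | Some r => Some (block_start N (y N.+2) + r)
  | None => if y N then Some (spacer_rank N (y N.+1) (y N.+2)) else None
  end.
Proof. by []. Qed.

Lemma spacer_zero_below N e1 e2 y : zero_below N (spacer N e1 e2 y).
Proof. by move=> i iN; rewrite /spacer iN. Qed.

Lemma spacer_tail N e1 e2 y i : N.+2 < i -> spacer N e1 e2 y i = y i.
Proof. by move=> Ni; rewrite /spacer; do 4 (case: ifP => ? //; first lia). Qed.

Lemma set_coord_id p y : set_coord p (y p) y = y.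
Proof. by apply: funext => i; rewrite /set_coord; case: eqP => // ->. Qed.

Lemma spacer_id N y : y N -> zero_below N y -> spacer N (y N.+1) (y N.+2) y = y.
Proof.
move=> yN y0; apply: funext => i; rewrite /spacer.
case: ifP => [/y0 -> //|_]; case: eqP => [-> //|_].
by case: eqP => [-> //|_]; case: eqP => [-> //|_].
Qed.

Lemma unrank_spacer N e1 e2 y :
  unrank N.+1 (spacer_rank N e1 e2) y = spacer N e1 e2 y.
Proof.
rewrite unrankS /spacer_rank.
by case: e1; case: e2; repeat (case: ifP => ?; try lia).
Qed.

Lemma unrank_block N b r y : r < height N ->
  unrank N.+1 (block_start N b + r) y = unrank N r (set_coord N.+2 b y).
Proof.
move=> rN; rewrite unrankS /block_start; case: b.
  by repeat (case: ifP => ?; try lia); congr unrank; lia.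
by repeat (case: ifP => ?; try lia).
Qed.

Lemma unrank_tail N r y i : N.+1 < i -> unrank N r y i = y i.
Proof.
elim: N r y => [|N IH] r y Ni; first by rewrite /= ifF //; lia.
have setE b r' : unrank N r' (set_coord N.+2 b y) i = y i.
  by rewrite IH 1?ltnW // /set_coord ifF //; lia.
by rewrite unrankS; repeat case: ifP => _; rewrite ?setE ?spacer_tail.
Qed.

Lemma eq_unrank N r y y' :
  (forall i, N.+1 < i -> y i = y' i) -> unrank N r y = unrank N r y'.
Proof.
elim: N r y y' => [|N IH] r y y' yy'.
  by apply: funext => i /=; case: ifP => // ?; apply: yy'; lia.
have spE e1 e2 : spacer N e1 e2 y = spacer N e1 e2 y'.
  by apply: funext => i; rewrite /spacer; do 4 (case: ifP => // ?); apply: yy'; lia.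
have setE b r' : unrank N r' (set_coord N.+2 b y) = unrank N r' (set_coord N.+2 b y').
  by apply: IH => i Ni; rewrite /set_coord; case: ifP => // ?; apply: yy'; lia.
by rewrite (unrankS N r y) (unrankS N r y'); repeat case: ifP => _.
Qed.

Lemma unrank_unrank N r r' y : unrank N r (unrank N r' y) = unrank N r y.
Proof. by apply: eq_unrank => i Ni; rewrite unrank_tail. Qed.

Lemma unrank_prefix N r y y' i :
  i < N.+3 -> unrank N.+1 r y i = unrank N.+1 r y' i.
Proof.
elim: N r y y' i => [|N IH] r y y' i iN.
  by case: i iN => [|[|[|i]]] // _; rewrite /=; repeat case: ifP => _.
have spE e1 e2 : spacer N.+1 e1 e2 y i = spacer N.+1 e1 e2 y' i.
  by rewrite /spacer; do 4 (case: ifP => // ?); lia.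
have setE b r' :
    unrank N.+1 r' (set_coord N.+3 b y) i = unrank N.+1 r' (set_coord N.+3 b y') i.
  have [iN3|iN3] := ltnP i N.+3; first exact: IH.
  have -> : i = N.+3 by lia.
  by rewrite !unrank_tail // /set_coord eqxx.
by rewrite (unrankS N.+1 r y) (unrankS N.+1 r y'); repeat case: ifP => _.
Qed.

Lemma floor_cases N r : r < height N.+1 ->
  (exists e1 e2, r = spacer_rank N e1 e2) \/
  (exists b r', r' < height N /\ r = block_start N b + r').
Proof.
rewrite heightS /spacer_rank /block_start => rN.
have [r0|r0] := leqP r 0; first by left; exists false, false; simpl; lia.
have [r1|r1] := leqP r (height N).
  by right; exists false, r.-1; simpl; split; lia.
have [r2|r2] := leqP r (height N).+1; first by left; exists false, true; simpl; lia.
have [r3|r3] := leqP r (height N).*2.+1.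
  by right; exists true, (r - (height N).+2); simpl; split; lia.
have [r4|r4] := leqP r (height N).*2.+2; first by left; exists true, false; simpl; lia.
by left; exists true, true; simpl; lia.
Qed.

Lemma rank_None N y : rank N y = None <-> zero_below N y.
Proof.
elim: N => [|N IH]; first by split => // _ i.
rewrite rankS; case E: (rank N y) => [r|].
  split => // yN; suff : rank N y = None by rewrite E.
  by apply/IH => i iN; apply: yN; lia.
have {}IH := proj1 IH E.
case: ifP => yN; split => // y0; first by have := y0 N (ltnSn N); rewrite yN.
by move=> i; rewrite ltnS leq_eqVlt => /orP[/eqP ->|]; [|apply: IH].
Qed.

Lemma spacer_rank_lt N e1 e2 : spacer_rank N e1 e2 < height N.+1.
Proof. by rewrite /spacer_rank heightS; case: e1; case: e2; lia. Qed.

Lemma block_start_lt N b r : r < height N -> block_start N b + r < height N.+1.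
Proof. by rewrite /block_start heightS; case: b; lia. Qed.

Lemma rank_lt N y r : rank N y = Some r -> r < height N.
Proof.
elim: N r => [//|N IH] r; rewrite rankS.
case E: (rank N y) => [r'|]; first by move=> [<-]; apply/block_start_lt/IH.
by case: ifP => // _ [<-]; apply: spacer_rank_lt.
Qed.

Lemma eq_rank N y y' : (forall i, i < N.+2 -> y i = y' i) -> rank N y = rank N y'.
Proof.
elim: N => [//|N IH] yy'; rewrite !rankS IH => [|i iN]; last by apply: yy'; lia.
by rewrite !yy' //; lia.
Qed.

Lemma rank_spacer N e1 e2 y :
  rank N.+1 (spacer N e1 e2 y) = Some (spacer_rank N e1 e2).
Proof.
rewrite rankS (proj2 (rank_None _ _) (spacer_zero_below _ _ _)).
have s0 : spacer N e1 e2 y N by rewrite /spacer ltnn eqxx.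
have s1 : spacer N e1 e2 y N.+1 = e1.
  by rewrite /spacer; do 2 (case: ifP; first lia); rewrite eqxx.
have s2 : spacer N e1 e2 y N.+2 = e2.
  by rewrite /spacer; do 3 (case: ifP; first lia); rewrite eqxx.
by rewrite s0 s1 s2.
Qed.

Lemma unrankK N r y : r < height N -> rank N (unrank N r y) = Some r.
Proof.
elim: N r y => [//|N IH] r y /floor_cases [[e1 [e2 ->]]|[b [r' [r'N ->]]]].
  by rewrite unrank_spacer rank_spacer.
by rewrite unrank_block // rankS IH // unrank_tail // /set_coord eqxx.
Qed.

Lemma rankK N r y : rank N y = Some r -> unrank N r y = y.
Proof.
elim: N r y => [//|N IH] r y; rewrite rankS.
case E: (rank N y) => [r'|].
  by move=> [<-]; rewrite unrank_block ?set_coord_id ?IH //; apply: rank_lt E.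
have /rank_None y0 := E.
by case: ifP => // yN [<-]; rewrite unrank_spacer spacer_id.
Qed.

Definition block_offset (y : nat -> bool) L N := \sum_(L <= j < N) block_start j (y j.+2).

Lemma block_offset_lt y L d b :
  b < height L -> block_offset y L (L + d) + b < height (L + d).
Proof.
move=> bL; elim: d => [|d IH]; first by rewrite addn0 /block_offset big_geq.
rewrite addnS /block_offset big_nat_recr ?leq_addr //= addnAC addnC.
exact: block_start_lt.
Qed.

Lemma rank_add d y L a : rank L y = Some a ->
  rank (L + d) y = Some (block_offset y L (L + d) + a).
Proof.
move=> ya; elim: d => [|d IH]; first by rewrite addn0 /block_offset big_geq.
rewrite addnS rankS IH /block_offset big_nat_recr ?leq_addr //=.
by congr Some; lia.
Qed.

Lemma unrank_add d y L b : b < height L ->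
  unrank L b y = unrank (L + d) (block_offset y L (L + d) + b) y.
Proof.
move=> bL; elim: d => [|d IH]; first by rewrite addn0 /block_offset big_geq.
rewrite IH addnS /block_offset big_nat_recr ?leq_addr //.
set S := \sum_(L <= j < L + d) _.
rewrite (_ : S + _ + b = block_start (L + d) (y (L + d).+2) + (S + b)); last by lia.
by rewrite unrank_block ?set_coord_id //; apply: block_offset_lt.
Qed.

Lemma unrank_shift y L L' a a' b b' : rank L y = Some a -> rank L' y = Some a' ->
  b < height L -> b' < height L' -> a + b' = a' + b -> unrank L b y = unrank L' b' y.
Proof.
wlog LL' : L L' a a' b b' / L <= L'.
  move=> W ya ya' bL bL' E; have [LL'|/ltnW L'L] := leqP L L'; first exact: (W _ _ a a').
  by symmetry; apply: (W _ _ a' a) => //; lia.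
move=> ya; rewrite -(subnKC LL') (rank_add _ ya) => -[<-] bL _ E.
by rewrite (unrank_add (L' - L) _ bL); congr unrank; lia.
Qed.

Lemma rank_exists y k L : y k -> k < L -> exists a, rank L y = Some a.
Proof.
move=> yk kL; case E: (rank L y) => [a|]; first by exists a.
by move/rank_None: E => /(_ k kL); rewrite yk.
Qed.

Lemma rank_nonzero y L a : rank L y = Some a -> exists i, y i.
Proof.
move=> ya; apply: contrapT => /forallNP y0.
suff : rank L y = None by rewrite ya.
by apply/rank_None => i _; apply/negbTE/negP/y0.
Qed.

Lemma rank_first_one y k : y k -> zero_below k y ->
  exists c, [/\ rank k.+2 y = Some c, 0 < c & c.+1 < height k.+2].
Proof.
move=> yk y0; have /rank_None yk0 := y0.
exists (block_start k.+1 (y k.+3) + spacer_rank k (y k.+1) (y k.+2)).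
rewrite !rankS yk0 yk; split => //; first by rewrite /block_start; case: (y k.+3); lia.
have := spacer_rank_lt k (y k.+1) (y k.+2).
by rewrite /block_start !heightS; case: (y k.+3); lia.
Qed.

Lemma first_one y : (exists i, y i) -> exists k, y k /\ zero_below k y.
Proof.
move=> P; case: (ex_minnP P) => k yk kmin; exists k; split => // i ik.
by apply/negbTE/negP => /kmin; lia.
Qed.

(* A point whose first one is at [k] is moved inside the level-[k.+2] tower,
   where it lies neither on the bottom nor on the top floor. *)
Definition tower_move (f : nat -> nat) (y : nat -> bool) : nat -> bool :=
  match pselect (exists i, y i) with
  | left P => let k := ex_minn P in
    if rank k.+2 y is Some a then unrank k.+2 (f a) y else y
  | right _ => y
  end.

Definition tower_succ := tower_move succn.
Definition tower_pred := tower_move predn.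

Lemma tower_move_first_one f y k c : y k -> zero_below k y ->
  rank k.+2 y = Some c -> tower_move f y = unrank k.+2 (f c) y.
Proof.
move=> yk y0 yc; rewrite /tower_move; case: pselect => [P|[]]; last by exists k.
case: ex_minnP => k' yk' kmin.
have -> : k' = k.
  apply/eqP; rewrite eqn_leq kmin //=; rewrite leqNgt; apply/negP => /y0.
  by rewrite yk'.
by rewrite yc.
Qed.

Lemma tower_move0 f : tower_move f (fun=> false) = fun=> false.
Proof. by rewrite /tower_move; case: pselect => // -[]. Qed.

Lemma eq_cst_false y : ~ (exists i, y i) -> y = fun=> false.
Proof. by move=> y0; apply: funext => i; apply/negbTE/negP => yi; apply: y0; exists i. Qed.

Lemma tower_moveE f y L a : rank L y = Some a -> f a < height L ->
  (forall c, 0 < c -> f c <= c.+1 /\ c + f a = a + f c) ->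
  tower_move f y = unrank L (f a) y.
Proof.
move=> ya fa f_shift; have [k [yk y0]] := first_one (rank_nonzero ya).
have [c [yc c0 c1]] := rank_first_one yk y0; have [fc E] := f_shift c c0.
rewrite (tower_move_first_one _ yk y0 yc); apply: unrank_shift yc ya _ fa E.
exact: leq_ltn_trans c1.
Qed.

Lemma tower_succE y L a :
  rank L y = Some a -> a.+1 < height L -> tower_succ y = unrank L a.+1 y.
Proof. by move=> ya aL; apply: tower_moveE => // c _; split => //; lia. Qed.

Lemma tower_predE y L a :
  rank L y = Some a -> 0 < a -> tower_pred y = unrank L a.-1 y.
Proof.
move=> ya a0; have aL := rank_lt ya.
by apply: tower_moveE ya _ _ => [|c c0]; [lia | split; lia].
Qed.

Lemma tower_succK : cancel tower_succ tower_pred.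
Proof.
move=> y; have [P|/eq_cst_false ->] := pselect (exists i, y i); last first.
  by rewrite /tower_succ /tower_pred !tower_move0.
have [k [yk y0]] := first_one P; have [c [yc c0 c1]] := rank_first_one yk y0.
by rewrite (tower_succE yc c1) (tower_predE (unrankK _ c1)) // unrank_unrank rankK.
Qed.

Lemma tower_predK : cancel tower_pred tower_succ.
Proof.
move=> y; have [P|/eq_cst_false ->] := pselect (exists i, y i); last first.
  by rewrite /tower_succ /tower_pred !tower_move0.
have [k [yk y0]] := first_one P; have [c [yc c0 c1]] := rank_first_one yk y0.
rewrite (tower_predE yc c0) (tower_succE (unrankK _ _)); try lia.
by rewrite prednK // unrank_unrank rankK.
Qed.

Lemma tower_succ_fixed y : tower_succ y = y <-> y = fun=> false.
Proof.
split => [Ty|->]; last exact: tower_move0.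
apply: eq_cst_false => /first_one [k [yk y0]].
have [c [yc _ c1]] := rank_first_one yk y0.
by have := unrankK y c1; rewrite -(tower_succE yc c1) Ty yc => -[]; lia.
Qed.

Lemma iter_tower_succ N y a j : rank N y = Some a -> a + j < height N ->
  iter j tower_succ y = unrank N (a + j) y.
Proof.
move=> ya; elim: j => [|j IH] aj /=; first by rewrite addn0 rankK.
rewrite IH 1?(tower_succE (unrankK _ _)) ?unrank_unrank ?addnS //; lia.
Qed.

Lemma iter_tower_pred N y a j : rank N y = Some a -> j <= a ->
  iter j tower_pred y = unrank N (a - j) y.
Proof.
move=> ya; have aN := rank_lt ya; elim: j => [|j IH] ja /=; first by rewrite subn0 rankK.
rewrite IH 1?(tower_predE (unrankK _ _)) ?unrank_unrank; try lia.
by congr unrank; lia.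
Qed.

Lemma tower_move_local f x n : (exists i, x i) -> exists M, forall y,
  (forall j, j < M -> y j = x j) -> forall i, i < n -> tower_move f y i = tower_move f x i.
Proof.
move=> /first_one [k [xk x0]]; have [c [xc _ _]] := rank_first_one xk x0.
exists (maxn n k.+4) => y yx i iN.
have yk : y k by rewrite yx //; lia.
have y0 : zero_below k y by move=> j jk; rewrite yx ?x0 //; lia.
have yc : rank k.+2 y = Some c.
  by rewrite -xc; apply: eq_rank => j jk; apply: yx; lia.
rewrite (tower_move_first_one _ yk y0 yc) (tower_move_first_one _ xk x0 xc).
have [ik|ik] := ltnP i k.+4; first exact: unrank_prefix.
by rewrite !unrank_tail ?yx //; lia.
Qed.

Lemma zero_below_le k k' y : k <= k' -> zero_below k' y -> zero_below k y.
Proof. by move=> kk' y0 i ik; apply: y0; apply: leq_trans kk'. Qed.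

Lemma zero_below_unrank N r z k : r < height N -> zero_below k (unrank N r z) -> k < N.
Proof.
move=> rN z0; rewrite ltnNge; apply/negP => Nk.
by have := unrankK z rN; rewrite (proj2 (rank_None _ _) (zero_below_le Nk z0)).
Qed.

Lemma unrank_adjacent N r z : r.+1 < height N.+2 ->
  (exists b r', r'.+1 < height N.+1 /\ r = block_start N.+1 b + r') \/
  zero_below N (unrank N.+2 r z) /\ zero_below N (unrank N.+2 r.+1 z).
Proof.
move=> rN; have spacer0 e1 e2 : zero_below N (unrank N.+2 (spacer_rank N.+1 e1 e2) z).
  by rewrite unrank_spacer => i iN; rewrite spacer_zero_below //; lia.
have edge0 b r' : r' = 0 \/ r'.+1 = height N.+1 ->
    zero_below N (unrank N.+2 (block_start N.+1 b + r') z).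
  move=> r'E; rewrite unrank_block; last by case: r'E => ->.
  case: r'E => [->|r'E].
    by rewrite (unrank_spacer N false false); apply: spacer_zero_below.
  have -> : r' = spacer_rank N true true by move: r'E; rewrite heightS /=; lia.
  by rewrite unrank_spacer; apply: spacer_zero_below.
have /floor_cases [[e1 [e2 Er]]|[b [r' [r'N Er]]]] := ltnW rN; subst r.
  right; split; first exact: spacer0.
  move: rN; rewrite /spacer_rank (heightS N.+1); case: e1; case: e2 => rN; first lia.
  - exact: (spacer0 true true).
  - by have := edge0 true 0 (or_introl erefl); rewrite addn0.
  - exact: (edge0 false 0 (or_introl erefl)).
have [r'N1|r'N1] := ltnP r'.+1 (height N.+1); first by left; exists b, r'.
have {r'N r'N1}r'E : r'.+1 = height N.+1 by lia.
right; split; first by apply: edge0; right.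
have -> : (block_start N.+1 b + r').+1 = spacer_rank N.+1 b (~~ b).
  by move: r'E; rewrite /block_start /spacer_rank heightS; case: b {rN} => /=; lia.
exact: spacer0.
Qed.

Lemma zero_below_adjacent N r z k : r.+1 < height N ->
  (zero_below k.+1 (unrank N r z) -> zero_below k (unrank N r.+1 z)) /\
  (zero_below k.+1 (unrank N r.+1 z) -> zero_below k (unrank N r z)).
Proof.
elim: N r z => [//|[|N] IH] r z rN.
  by split => /zero_below_unrank; [move=> /(_ (ltnW rN))|move=> /(_ rN)].
have [[b [r' [r'N ->]]]|[zr zr1]] := unrank_adjacent z rN.
  by rewrite -(addnS (block_start _ b)) !unrank_block ?(ltnW r'N) //; apply: IH.
have kN r'' : r'' < height N.+2 -> zero_below k.+1 (unrank N.+2 r'' z) -> k <= N.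
  exact: zero_below_unrank.
by split=> [/(kN _ (ltnW rN)) kN1|/(kN _ rN) kN1]; exact: zero_below_le kN1 _.
Qed.

Lemma tower_succ_zero_below k y : zero_below k.+1 y -> zero_below k (tower_succ y).
Proof.
have [P|/eq_cst_false ->] := pselect (exists i, y i); last first.
  by rewrite /tower_succ tower_move0.
have [j [yj y0]] := first_one P; have [c [yc _ c1]] := rank_first_one yj y0.
rewrite (tower_succE yc c1) -{1}(rankK yc).
exact: (zero_below_adjacent y k c1).1.
Qed.

Lemma tower_pred_zero_below k y : zero_below k.+1 y -> zero_below k (tower_pred y).
Proof.
have [P|/eq_cst_false ->] := pselect (exists i, y i); last first.
  by rewrite /tower_pred tower_move0.
have [j [yj y0]] := first_one P; have [c [yc c0 c1]] := rank_first_one yj y0.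
rewrite (tower_predE yc c0) -{1}(rankK yc) -{1}(prednK c0).
by apply: (zero_below_adjacent y k _).2; rewrite prednK //; apply: ltnW.
Qed.

Lemma pow2_periodic m B0 : 0 < m -> exists p B, [/\ 0 < p, B0 <= B,
  forall s, 2 ^ (p * (B + s)) = 2 ^ (p * B) %[mod m] & coprime (2 ^ (p * B) - 3) m].
Proof.
move=> m0; have [m' m'_odd Em] := pfactor_coprime (isT : prime 2) m0.
set e := logn 2 m in Em; set p := totient m'.
have m'0 : 0 < m' by move: m0; rewrite Em muln_gt0 => /andP[].
have p0 : 0 < p by rewrite totient_gt0.
have Euler n : 2 ^ (p * n) = 1 %[mod m'].
  by rewrite expnM -modnXm Euler_exp_totient // modnXm exp1n.
have pow2_e n : e <= n -> 2 ^ e %| 2 ^ (p * n).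
  by move=> en; apply: dvdn_exp2l; apply: leq_trans en _; apply: leq_pmull.
have m'_2e : coprime m' (2 ^ e) by rewrite coprime_sym coprimeXl // coprime_sym.
exists p, (B0 + e + 2); split => [//||s|]; first lia.
  rewrite Em; apply/eqP; rewrite chinese_remainder // !Euler eqxx /=.
  by rewrite (eqP (pow2_e _ _)) ?(eqP (pow2_e _ _)) //; lia.
have x4 : 4 <= 2 ^ (p * (B0 + e + 2)).
  by rewrite (_ : 4 = 2 ^ 2) // leq_exp2l //; nia.
rewrite Em coprimeMr; apply/andP; split; last first.
  apply: coprimeXr; rewrite coprimen2 oddB; last by lia.
  by rewrite oddX; case: (p * _) x4.
set x := 2 ^ _ - 3.
have m'_x2 : m' %| x + 2.
  rewrite (_ : x + 2 = 2 ^ (p * (B0 + e + 2)) - 1); last by rewrite /x; lia.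
  by rewrite -eqn_mod_dvd; [apply/eqP/Euler | lia].
rewrite /coprime -dvdn1 -(eqP m'_odd) dvdn_gcd dvdn_gcdr andbT.
by rewrite -(dvdn_addr 2 (dvdn_gcdl x m')); apply: dvdn_trans m'_x2; apply: dvdn_gcdr.
Qed.

Lemma levels_mod m L : 0 < m -> exists (J : nat -> nat) u, [/\ 0 < u, coprime u m,
  forall t, L <= J t, forall t, J t < J t.+1 & forall t, (height (J t)).+1 = u %[mod m]].
Proof.
move=> m0; have [p [B [p0 LB per cop]]] := pow2_periodic (L + 2) m0.
have pow2_ge4 t : 4 <= 2 ^ (p * (B + t)).
  by rewrite (_ : 4 = 2 ^ 2) // leq_exp2l //; nia.
exists (fun t => p * (B + t) - 2), (2 ^ (p * B) - 3); split => [||t|t|t] //; try nia.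
  by have := pow2_ge4 0; rewrite addn0; lia.
have := height_exp (p * (B + t) - 2); rewrite (_ : (_ - 2).+2 = p * (B + t)); last by nia.
move=> hE; have := pow2_ge4 0; rewrite addn0 => ge4.
apply/eqP; rewrite -(eqn_modDr 3) (_ : _ + 3 = 2 ^ (p * (B + t))); last by lia.
by rewrite subnK ?per //; lia.
Qed.

Definition level_sum (ch : nat -> bool) A N :=
  \sum_(A <= j < N) (if ch j then (height j).+1 else 0).

Definition reachable m A N r := exists ch, level_sum ch A N = r %[mod m].

Lemma reachable_step m A N r b : A <= N -> reachable m A N r ->
  reachable m A N.+1 (r + (if b then (height N).+1 else 0)).
Proof.
move=> AN [ch chr]; exists (fun j => if j == N then b else ch j).
rewrite /level_sum big_nat_recr //= eqxx -modnDml.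
rewrite (@eq_big_nat _ _ _ _ _ _ (fun j => if ch j then (height j).+1 else 0)).
  by rewrite -/(level_sum ch A N) chr modnDml.
by move=> j /andP[_ jN]; rewrite (_ : (j == N) = false) //; lia.
Qed.

Lemma reachable_widen m A N N' r : A <= N -> N <= N' ->
  reachable m A N r -> reachable m A N' r.
Proof.
move=> AN /subnKC <-; elim: (N' - N) => [|d IH] reach; first by rewrite addn0.
by rewrite addnS -[r]addn0; apply: (reachable_step false) (IH reach); lia.
Qed.

Lemma eq_reachable m A N r r' :
  r = r' %[mod m] -> reachable m A N r -> reachable m A N r'.
Proof. by move=> rr' [ch chr]; exists ch; rewrite chr. Qed.

Lemma reachable_all m A N0 : 0 < m -> A <= N0 ->
  exists N, N0 <= N /\ forall r, reachable m A N r.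
Proof.
move=> m0 AN0; have [J [u [u0 um N0J Jinc Ju]]] := levels_mod N0 m0.
have Jmono t t' : t <= t' -> J t <= J t'.
  move=> /subnKC <-; elim: (t' - t) => [|d IH]; first by rewrite addn0.
  by rewrite addnS; apply: leq_trans IH (ltnW (Jinc _)).
have AJ t : A <= J t := leq_trans AN0 (N0J t).
have reachJ t : reachable m A (J t) (t * u).
  elim: t => [|t IH].
    apply: (@reachable_widen _ _ A) => //.
    by exists (fun=> false); rewrite /level_sum big_geq.
  apply: (@reachable_widen _ _ (J t).+1); [exact: leq_trans (AJ t) _|exact: Jinc|].
  apply: eq_reachable (reachable_step true (AJ t) IH).
  by rewrite mulSn addnC /=; apply/eqP; rewrite eqn_modDr; apply/eqP.
exists (J m); split => // r.
have [a b Eab _] := egcdnP m u0; rewrite (eqP um) in Eab.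
apply: eq_reachable (_ : (r * a) %% m * u = r %[mod m]) _.
  by rewrite modnMml -mulnA Eab mulnDr muln1 mulnA modnMDl.
apply: reachable_widen (reachJ _) => //.
by apply: Jmono; apply: ltnW; rewrite ltn_mod.
Qed.

Lemma block_offset_level_sum y L N : L <= N ->
  block_offset y L N = (N - L) + level_sum (fun j => y j.+2) L N.
Proof.
move=> LN; rewrite /block_offset /level_sum -[N - L]muln1 -sum_nat_const_nat -big_split /=.
by apply: eq_big_nat => j _; rewrite /block_start; case: (y j.+2).
Qed.

Lemma unrank_approx m x z M L a : 0 < m -> rank L x = Some a ->
  exists N a' P, [/\ rank N x = Some a', P < height N, P = a' %[mod m] &
    forall i, i < M -> unrank N P x i = z i].
Proof.
move=> m0 xa; pose w i := if i < M then z i else i == M.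
have [rho wrho] : exists rho, rank M.+1 w = Some rho.
  by apply: (@rank_exists w M) => //; rewrite /w ltnn eqxx.
have [N [LMN reach]] := reachable_all m0 (leq_maxr L M.+1).
have [LN MN] : L <= N /\ M.+1 <= N by split; lia.
have [a' xa'] : exists a', rank N x = Some a'.
  by rewrite -(subnKC LN) (rank_add _ xa); eexists.
set K := N - M.+1.
(* Adding [rho + K] to this residue gives [a' + m * (rho + K)]. *)
have [ch Ech] := reach (a' + (m - 1) * (rho + K)).
(* [u] lies in the cylinder of [z] and its coordinates [j.+2] for
   [M < j < N] are [ch j]. *)
pose x' i := if (M.+2 < i) && (i < N.+2) then ch i.-2 else x i.
pose u := unrank M.+1 rho x'.
have urho : rank M.+1 u = Some rho by apply/unrankK/(rank_lt wrho).
have uN : rank N u = Some (K + level_sum ch M.+1 N + rho).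
  rewrite -(subnKC MN) (rank_add _ urho) subnKC // block_offset_level_sum //.
  congr (Some (_ + _ + _)); apply: eq_big_nat => j /andP[Mj jN].
  have xj : x' j.+2 = ch j by rewrite /x' ifT //; lia.
  by rewrite /u unrank_tail ?ltnS // xj.
exists N, a', (K + level_sum ch M.+1 N + rho); split => //; first exact: rank_lt uN.
  rewrite addnAC -modnDmr Ech modnDmr.
  by rewrite (_ : _ + _ = (rho + K) * m + a') ?modnMDl //; nia.
move=> i iM; have -> : unrank N (K + level_sum ch M.+1 N + rho) x = u.
  rewrite -[RHS](rankK uN); apply: eq_unrank => j Nj.
  by rewrite /u unrank_tail /x' ?ifF //; lia.
by rewrite /u (unrank_prefix _ _ w); [rewrite rankK // /w iM | lia].
Qed.

Lemma iter_approx m x z M : 0 < m -> (exists i, x i) -> exists q,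
  (forall i, i < M -> iter (m * q) tower_succ x i = z i) \/
  (forall i, i < M -> iter (m * q) tower_pred x i = z i).
Proof.
move=> m0 /first_one [k [xk x0]]; have [c [xc _ _]] := rank_first_one xk x0.
have [N [a [P [xa PN Pa xz]]]] := unrank_approx z M m0 xc.
have aN := rank_lt xa.
have [aP|Pa'] := leqP a P.
  have /dvdnP [q Eq] : m %| P - a by rewrite -eqn_mod_dvd // Pa.
  exists q; left => i iM; rewrite mulnC -Eq (iter_tower_succ xa); last by lia.
  by rewrite subnKC // xz.
have /dvdnP [q Eq] : m %| a - P by rewrite -eqn_mod_dvd ?Pa //; lia.
exists q; right => i iM; rewrite mulnC -Eq (iter_tower_pred xa); last by lia.
by rewrite (_ : a - (a - P) = P) ?xz //; lia.
Qed.

Local Open Scope classical_set_scope.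

Lemma cvg_cantor {X : Type} (F : set_system X) {FF : Filter F}
    (g : X -> cantor_space) (f : cantor_space) :
  (forall i, \forall t \near F, g t i = f i) -> g @ F --> f.
Proof.
move=> gf; apply/cvg_sup => i U [V] [[W] oW <-] WfN WU.
apply: (filterS WU); rewrite nbhs_simpl.
by apply: filterS (gf i) => t /= ->; apply: WfN.
Qed.

Lemma near_prefix (x : cantor_space) M :
  \forall y \near x, forall i, i < M -> y i = x i.
Proof.
elim: M => [|M IH]; first by near=> y => i.
near=> y => i.
have yM : y M = x M.
  near: y; apply: (@proj_continuous nat (fun _ => bool) M x [set x M]).
  exact: discrete_set1.
have yx : forall i, i < M -> y i = x i by near: y.
by rewrite ltnS leq_eqVlt => /orP[/eqP ->|/yx].
Unshelve. all: by end_near.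
Qed.

(* By contradiction: otherwise a sequence agreeing with z on longer and longer
   prefixes converges to z while avoiding its neighbourhood O. *)
Lemma nbhs_cylinder (z : cantor_space) (O : set cantor_space) : nbhs z O ->
  exists M, forall y : cantor_space, (forall i, i < M -> y i = z i) -> O y.
Proof.
move=> Oz; apply: contrapT => /forallNP notO.
have {}notO M : exists y : cantor_space, (forall i, i < M -> y i = z i) /\ ~ O y.
  by have /existsNP [y /not_implyP [yz Oy]] := notO M; exists y.
have [g gP] := choice notO.
have : g @ \oo --> z.
  by apply: cvg_cantor => i; exists i.+1 => // n /= ni; apply: (gP n).1.
move=> /(_ _ Oz); rewrite nbhs_simpl => -[N _ gN].
exact: (gP N).2 (gN N (leqnn N)).
Qed.

Lemma continuous_cantor (f : cantor_space -> cantor_space) :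
  (forall (x : cantor_space) i, exists M, forall y : cantor_space,
     (forall j, j < M -> y j = x j) -> f y i = f x i) -> continuous f.
Proof.
move=> floc x; apply: cvg_cantor => i; have [M fM] := floc x i.
by apply: filterS (near_prefix x M) => y /fM.
Qed.

Lemma continuous_tower_move f :
  (forall k y, zero_below k.+1 y -> zero_below k (tower_move f y)) ->
  continuous (tower_move f : cantor_space -> cantor_space).
Proof.
move=> f0; apply: continuous_cantor => x i.
have [P|/eq_cst_false x0] := pselect (exists j, x j).
  by have [M xM] := tower_move_local f i.+1 P; exists M => y /xM; apply.
by subst x; rewrite tower_move0; exists i.+2 => y /f0; apply.
Qed.

Local Open Scope ring_scope.

Lemma ziterN {X : Type} (T Tinv : X -> X) (n : nat) (x : X) :
  ziter T Tinv (- n%:Z) x = iter n Tinv x.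
Proof. by case: n. Qed.

Lemma dense_tower_orbit (x : cantor_space) (m : nat) :
  (exists i, x i) -> (0 < m)%N -> dense [set y : cantor_space |
    exists k : int, y = ziter tower_succ tower_pred (m%:Z * k) x].
Proof.
move=> x_neq0 m0 O [z Oz] oO.
have [M zM] := nbhs_cylinder (open_nbhs_nbhs (conj oO Oz)).
have [q [xz|xz]] := iter_approx z M m0 x_neq0.
  by exists (iter (m * q) tower_succ x); split; [exact: zM | exists q%:Z].
exists (iter (m * q) tower_pred x); split; first exact: zM.
by exists (- q%:Z); rewrite mulrN -PoszM ziterN.
Qed.

Theorem theorem6p1 :
  exists (T Tinv : cantor_space -> cantor_space) (x0 : cantor_space),
    [/\ homeomorphism_with T Tinv,
        (forall x : cantor_space, T x = x <-> x = x0) &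
        (forall x : cantor_space, x <> x0 ->
           forall m : nat, (0 < m)%N ->
             dense [set y | exists k : int, y = ziter T Tinv (m%:Z * k) x])].
Proof.
exists tower_succ, tower_pred, (fun=> false); split.
- split; [exact: tower_succK | exact: tower_predK | |].
    by apply: continuous_tower_move => k y; apply: tower_succ_zero_below.
  by apply: continuous_tower_move => k y; apply: tower_pred_zero_below.
- exact: tower_succ_fixed.
- move=> x x_neq0 m m0; apply: dense_tower_orbit => //.
  by apply: contrapT => /eq_cst_false.
Qed.
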